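(* In the setting described in the context, Algorithm 1 run on $(\psi,\mathcal{A})$, where $\psi$ is the weighted MaxSAT instance produced by Reduction 4, terminates and returns an array $\mathrm{Ans}$ such that for every $\vec a_l\in\mathcal{A}$, $\vec a_l\in\mathrm{Cons}(Q,I,\Sigma)$ if and only if $\mathrm{Ans}[l]$ is true.
   Context: An $\mathcal{R}$-instance $I$ is a finite set of facts. A (subset) repair of $I$ w.r.t. a set $\Sigma$ of constraints is a $J\subseteq I$ with $J\models\Sigma$ maximal under inclusion among subsets of $I$ satisfying $\Sigma$; $\mathrm{Cons}(Q,I,\Sigma)=\bigcap\{Q(J):J\text{ a repair of }I\}$. Potential answers: $\mathcal{A}=Q(I)$, enumerated as $\vec a_1,\vec a_2,\dots$. Setting: either (a) $\Sigma$ is a set of primary key constraints (one per relation) on a schema $\mathcal{R}$, $Q$ is a fixed non-boolean conjunctive query, and $\phi$ is the CNF-formula of Reduction 2; or (b) $\Sigma$ is a fixed finite set of denial constraints, $Q$ is a fixed union of non-boolean conjunctive queries, and $\phi$ is the CNF form of the formula $\phi'$ of Reduction 3. In both cases $\phi$ contains a variable $p_l$ for each $\vec a_l\in\mathcal{A}$, each $p_l$ occurs in $\phi$ only as the negative literal $\neg p_l$, and $\phi$ has the property that there is a satisfying assignment of $\phi$ with $p_l=1$ iff $\vec a_l\notin\mathrm{Cons}(Q,I,\Sigma)$. (Reduction 2: variables $x_i$ per fact $f_i$; clauses $\bigvee_{f_i\in G}x_i$ for each key-equal group $G$, i.e. maximal set of facts of one relation agreeing on the key attributes; clauses $\big(\bigvee_{f_i\in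 W}\neg x_i\big)\vee\neg p_l$ for each minimal witness $W$ to $Q[\vec a_l]$, i.e. inclusion-minimal $W\subseteq I$ satisfying the boolean query obtained by substituting $\vec a_l$ for the free variables. Reduction 3: additionally uses clauses $\bigvee_{f_i\in V}\neg x_i$ for each inclusion-minimal $V\subseteq I$ violating $\Sigma$, and for each fact $f_i$ the clause $x_i\vee\bigvee_j y^i_j$ together with $y^i_j\leftrightarrow\bigwedge_{f_d\in N^i_j}x_d$, where the $N^i_j$ are the near-violations w.r.t. $f_i$: sets $S\models\Sigma$ with $S\cup\{f_i\}$ a minimal violation, or $\{f_{true}\}$ with $x_{true}=\mathrm{true}$ if $\{f_i\}$ is itself a minimal violation; in place of key-equal group clauses.) Weighted MaxSAT: hard and weighted soft clauses; an optimal solution satisfies all hard clauses and maximizes total weight of satisfied soft clauses. Reduction 4: make all clauses of $\phi$ hard, and add for each $\vec a_l\in\mathcal{A}$ a soft unit clause $(p_l)$, all of equal weight; the result is $\psi$. Algorithm 1 on input $(\psi,\mathcal{A})$: set $\mathrm{Ans}[l]=\mathrm{true}$ for all $l$ and $moreAnswers=\mathrm{true}$. While $moreAnswers$: set $moreAnswers=\mathrm{false}$; let $opt$ be an optimal solution of the current $\psi$; for each $l$ with $opt(p_l)=1$: set $moreAnswers=\mathrm{true}$, $\mathrm{Ans}[l]=\mathrm{false}$, remove the unit clause $(p_l)$ from $\psi$, remove all clauses containing the literal $\neg p_l$ from $\psi$, and add the hard unit clause $(\neg p_l)$ to $\psi$. Finally return $\mathrm{Ans}$. *)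

From mathcomp Require Import all_boot.
Set Implicit Arguments. Unset Strict Implicit. Unset Printing Implicit Defensive.

(* Facts of the instance range over a finite type F; an instance is a set of
   facts.  [satS J] means J |= Sigma.  [Q J t] means t \in Q(J). *)

Definition is_repair (F : finType) (satS : {set F} -> bool) (I J : {set F}) : Prop :=
  [/\ J \subset I, satS J &
      forall J' : {set F}, J \subset J' -> J' \subset I -> satS J' -> J' = J].

Definition ConsAns (F : finType) (T : Type) (satS : {set F} -> bool)
  (Q : {set F} -> T -> bool) (I : {set F}) (t : T) : Prop :=
  forall J, is_repair satS I J -> Q J t.
Arguments ConsAns {F T} satS Q I t.

Definition lit (V : finType) := (V * bool)%type.   (* (v, true) = v, (v,false) = ~v *)
Definition clause (V : finType) := seq (lit V).
Definition cnf (V : finType) := seq (clause V).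

Definition lit_true (V : finType) (s : V -> bool) (x : lit V) : bool := s x.1 == x.2.
Definition clause_true (V : finType) (s : V -> bool) (c : clause V) : bool :=
  has (lit_true s) c.
Definition cnf_true (V : finType) (s : V -> bool) (f : cnf V) : bool :=
  all (clause_true s) f.

Record maxsat (V : finType) := MaxSat {
  hard : cnf V;
  soft : seq (clause V * nat)
}.

Definition soft_weight (V : finType) (s : V -> bool) (psi : maxsat V) : nat :=
  \sum_(cw <- soft psi | clause_true s cw.1) cw.2.

Definition optimal (V : finType) (psi : maxsat V) (s : V -> bool) : Prop :=
  cnf_true s (hard psi) /\
  forall t : V -> bool, cnf_true t (hard psi) -> soft_weight t psi <= soft_weight s psi.

Definition reduction4 (V : finType) (n : nat) (p : 'I_n -> V) (phi : cnf V) (w : nat)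
  : maxsat V :=
  MaxSat phi [seq ([:: (p l, true)], w) | l <- enum 'I_n].

Definition process_l (V : finType) (n : nat) (p : 'I_n -> V)
  (st : maxsat V * ('I_n -> bool)) (l : 'I_n) : maxsat V * ('I_n -> bool) :=
  let psi := st.1 in let ans := st.2 in
  (MaxSat ([seq c <- hard psi | (p l, false) \notin c] ++ [:: [:: (p l, false)]])
          [seq cw <- soft psi | (cw.1 != [:: (p l, true)]) && ((p l, false) \notin cw.1)],
   fun k => if k == l then false else ans k).

Definition loop_body (V : finType) (n : nat) (p : 'I_n -> V)
  (psi : maxsat V) (ans : 'I_n -> bool) (opt : V -> bool)
  : maxsat V * ('I_n -> bool) :=
  foldl (process_l p) (psi, ans) [seq l <- enum 'I_n | opt (p l)].

Definition more_answers (V : finType) (n : nat) (p : 'I_n -> V) (opt : V -> bool) : bool :=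
  has (fun l => opt (p l)) (enum 'I_n).

(* [alg1_halts_with p Post psi ans]: started in state (psi, ans) with
   moreAnswers = true, Algorithm 1 terminates for EVERY possible choice of the
   optimal solutions (and an optimal solution always exists when one is
   required), and every returned array satisfies Post. *)
Inductive alg1_halts_with (V : finType) (n : nat) (p : 'I_n -> V)
  (Post : ('I_n -> bool) -> Prop) : maxsat V -> ('I_n -> bool) -> Prop :=
| alg1_step psi ans :
    (exists opt, optimal psi opt) ->
    (forall opt, optimal psi opt ->
       (more_answers p opt ->
          alg1_halts_with p Post (loop_body p psi ans opt).1 (loop_body p psi ans opt).2) /\
       (~~ more_answers p opt -> Post (loop_body p psi ans opt).2)) ->
    alg1_halts_with p Post psi ans.

From mathcomp Require Import all_boot.
From mathcomp Require Import zify.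
From Stdlib Require Import Classical FunctionalExtensionality.
Set Implicit Arguments. Unset Strict Implicit. Unset Printing Implicit Defensive.

(* Throughout the run, the soft clauses are the units (p_l) of the still-active
   indices l (those with Ans[l] = true), and the hard clauses say "phi holds and
   p_l is false for every deactivated l"; an index is deactivated only when an
   optimal solution, hence a model of phi, sets p_l, i.e. only when a_l is not
   consistent.  Every non-final round deactivates an active index, so the loop
   terminates.  When it stops, the optimum has weight 0; since the p_l occur
   only negatively in phi, any model of phi with p_l = 1 for an active l can be
   cleared on the deactivated variables to a solution of positive weight, so no
   active a_l is inconsistent. *)

Lemma cnf_true_cat_unit_neg (V : finType) (s : V -> bool) (h : cnf V) (v : V) :
  cnf_true s ([seq c <- h | (v, false) \notin c] ++ [:: [:: (v, false)]])
  = cnf_true s h && ~~ s v.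
Proof.
rewrite /cnf_true all_cat /= /clause_true /= /lit_true /=.
case sv: (s v) => /=; first by rewrite !andbF.
rewrite !andbT all_filter; apply: eq_all => c /=.
case vc: ((v, false) \in c) => //=.
by apply/esym/hasP; exists (v, false); rewrite //= /lit_true sv.
Qed.

Lemma cnf_true_clear (V : finType) (phi : cnf V) (P : pred V) (s : V -> bool) :
  (forall c, c \in phi -> forall v, P v -> (v, true) \notin c) ->
  cnf_true s phi -> cnf_true (fun v => ~~ P v && s v) phi.
Proof.
move=> P_neg /allP s_phi; apply/allP => c c_phi.
case/hasP: (s_phi c c_phi) => [[v b] vc s_vb]; apply/hasP; exists (v, b) => //.
rewrite /lit_true /=; case Pv: (P v) => //=; case: b vc {s_vb} => // vc.
by have := P_neg c c_phi v Pv; rewrite vc.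
Qed.

Lemma exists_optimal (V : finType) (psi : maxsat V) :
  (exists s, cnf_true s (hard psi)) -> exists opt, optimal psi opt.
Proof.
move=> [s0 s0_hard].
have ffunK (t : V -> bool) : (fun x => [ffun x => t x] x) = t.
  by apply: functional_extensionality => x; rewrite ffunE.
pose P (f : {ffun V -> bool}) := cnf_true (fun x => f x) (hard psi).
have P0 : P [ffun x => s0 x] by rewrite /P ffunK.
case: (arg_maxnP (fun f : {ffun V -> bool} => soft_weight (fun x => f x) psi) P0).
move=> f Pf f_max; exists (fun x => f x); split=> // t t_hard.
by have := f_max [ffun x => t x]; rewrite /P ffunK; apply.
Qed.

Lemma count_predID_lt (T : Type) (a b : pred T) (s : seq T) :
  has (predI a b) s -> count (fun x => a x && ~~ b x) s < count a s.
Proof.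
elim: s => //= x s IH /orP [/andP [ax bx] | has_ab].
  by rewrite ax bx /= ltnS; apply: sub_count => y /andP [].
by have := IH has_ab; case: (a x); case: (b x) => /=; lia.
Qed.

Section Algorithm1.

Variables (V : finType) (n : nat) (p : 'I_n -> V) (phi : cnf V) (w : nat).
Hypothesis p_inj : injective p.
Hypothesis p_neg_only : forall c, c \in phi -> forall l, (p l, true) \notin c.
Hypothesis w_pos : 0 < w.
Hypothesis phi_sat : exists s, cnf_true s phi.

Variable inconsistent : 'I_n -> Prop.
Hypothesis witness_inconsistent :
  forall l, (exists s, cnf_true s phi /\ s (p l) = true) <-> inconsistent l.

Definition alg1_inv (psi : maxsat V) (ans : 'I_n -> bool) : Prop :=
  [/\ soft psi = [seq ([:: (p l, true)], w) | l <- enum 'I_n & ans l],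
      forall s, cnf_true s (hard psi) <->
                cnf_true s phi /\ (forall l, ~~ ans l -> ~~ s (p l))
    & forall l, ~~ ans l -> inconsistent l].

Lemma alg1_inv_reduction4 : alg1_inv (reduction4 p phi w) (fun _ => true).
Proof.
split=> //=; first by rewrite filter_predT.
by move=> s; split=> [|[]] //; split.
Qed.

Lemma soft_weight_inv psi ans (s : V -> bool) : alg1_inv psi ans ->
  soft_weight s psi = w * count (fun k => ans k && s (p k)) (enum 'I_n).
Proof.
case=> soft_psi _ _; rewrite /soft_weight soft_psi big_map big_filter_cond.
rewrite (eq_bigl (fun k => ans k && s (p k))); last first.
  by move=> k /=; rewrite /clause_true /lit_true /= orbF eqb_id.
by rewrite big_const_seq iter_addn_0 mulnC.
Qed.

Definition clear_inactive (ans : 'I_n -> bool) (s : V -> bool) : V -> bool :=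
  fun v => ~~ [exists k, (p k == v) && ~~ ans k] && s v.

Lemma clear_inactive_active (ans : 'I_n -> bool) (s : V -> bool) l :
  ans l -> clear_inactive ans s (p l) = s (p l).
Proof.
move=> ans_l; rewrite /clear_inactive; case: existsP => //= -[k].
by case/andP=> /eqP /p_inj ->; rewrite ans_l.
Qed.

Lemma clear_inactive_hard psi ans (s : V -> bool) : alg1_inv psi ans ->
  cnf_true s phi -> cnf_true (clear_inactive ans s) (hard psi).
Proof.
case=> _ hard_psi _ s_phi; apply/hard_psi; split.
  apply: cnf_true_clear s_phi => c c_phi v /existsP [k /andP [/eqP <- _]].
  exact: p_neg_only.
move=> l ans_l; rewrite /clear_inactive negb_and negbK; apply/orP; left.
by apply/existsP; exists l; rewrite eqxx.
Qed.

Lemma exists_optimal_inv psi ans :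
  alg1_inv psi ans -> exists opt, optimal psi opt.
Proof.
move=> inv; apply: exists_optimal; case: phi_sat => s s_phi.
by exists (clear_inactive ans s); apply: clear_inactive_hard.
Qed.

Lemma optimal_inv psi ans opt : alg1_inv psi ans -> optimal psi opt ->
  cnf_true opt phi /\ forall l, opt (p l) -> ans l.
Proof.
case=> _ hard_psi _ [/hard_psi [opt_phi inactive_off] _]; split=> // l opt_l.
by apply: contraLR opt_l; apply: inactive_off.
Qed.

Lemma process_l_ans st l k : (process_l p st l).2 k = st.2 k && (k != l).
Proof. by rewrite /=; case: eqP => _; rewrite ?andbT ?andbF. Qed.

Lemma process_l_inv st l : alg1_inv st.1 st.2 -> inconsistent l ->
  alg1_inv (process_l p st l).1 (process_l p st l).2.
Proof.
case: st => psi ans [soft_psi hard_psi inconsistent_inactive] inconsistent_l.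
set ans' := (process_l p _ l).2.
have ans'E k : ans' k = ans k && (k != l) by apply: process_l_ans.
split.
- rewrite /= soft_psi filter_map -filter_predI; congr map; apply: eq_filter => k /=.
  rewrite ans'E in_cons in_nil orbF xpair_eqE andbF /=.
  case: (eqVneq k l) => [->|k_l]; rewrite ?eqxx ?andbF //.
  case: (ans k); rewrite ?andbF ?andbT //.
  by apply/negP => /eqP [] /p_inj k_eq_l; rewrite k_eq_l eqxx in k_l.
- move=> s; rewrite cnf_true_cat_unit_neg; split.
  + case/andP=> /hard_psi [s_phi inactive_off] s_l; split=> // k.
    by rewrite ans'E negb_and negbK => /orP [/inactive_off|/eqP ->].
  + move=> [s_phi inactive_off]; apply/andP; split.
      apply/hard_psi; split=> // k ans_k; apply: inactive_off.
      by rewrite ans'E (negbTE (ans_k : ~~ ans k)).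
    by apply: inactive_off; rewrite ans'E eqxx andbF.
- move=> k; rewrite ans'E negb_and negbK => /orP [/inconsistent_inactive //|/eqP ->].
  exact: inconsistent_l.
Qed.

Lemma foldl_process_ans st ls k :
  (foldl (process_l p) st ls).2 k = st.2 k && (k \notin ls).
Proof.
elim: ls st => [|l ls IH] st /=; first by rewrite andbT.
by rewrite IH process_l_ans in_cons negb_or andbA [k == l]eq_sym.
Qed.

Lemma foldl_process_inv st ls :
  alg1_inv st.1 st.2 -> {in ls, forall l, inconsistent l} ->
  alg1_inv (foldl (process_l p) st ls).1 (foldl (process_l p) st ls).2.
Proof.
elim: ls st => [|l ls IH] st //= inv inconsistent_ls.
apply: IH; first by apply: process_l_inv; last exact/inconsistent_ls/mem_head.
by move=> k k_ls; apply/inconsistent_ls/mem_behead.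
Qed.

Lemma loop_body_ans psi ans opt k :
  (loop_body p psi ans opt).2 k = ans k && ~~ opt (p k).
Proof. by rewrite /loop_body foldl_process_ans mem_filter mem_enum andbT. Qed.

Lemma loop_body_inv psi ans opt : alg1_inv psi ans -> optimal psi opt ->
  alg1_inv (loop_body p psi ans opt).1 (loop_body p psi ans opt).2.
Proof.
move=> inv opt_psi; apply: foldl_process_inv => // l.
rewrite mem_filter => /andP [opt_l _]; apply/witness_inconsistent.
by exists opt; split=> //; case: (optimal_inv inv opt_psi).
Qed.

Lemma loop_body_count_lt psi ans opt : alg1_inv psi ans -> optimal psi opt ->
  more_answers p opt ->
  count (loop_body p psi ans opt).2 (enum 'I_n) < count ans (enum 'I_n).
Proof.
move=> inv opt_psi /hasP [l l_enum opt_l].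
rewrite (eq_count (loop_body_ans _ _ _)); apply: count_predID_lt.
apply/hasP; exists l => //=; rewrite opt_l andbT.
by case: (optimal_inv inv opt_psi) => _; apply.
Qed.

Lemma stop_active_consistent psi ans opt : alg1_inv psi ans -> optimal psi opt ->
  ~~ more_answers p opt -> forall l, ans l -> ~ inconsistent l.
Proof.
move=> inv [_ opt_max] no_more l ans_l /witness_inconsistent [s [s_phi s_l]].
have := opt_max _ (clear_inactive_hard inv s_phi).
rewrite !(soft_weight_inv _ inv) leqNgt => /negP; apply.
have -> : count (fun k => ans k && opt (p k)) (enum 'I_n) = 0.
  apply/eqP; rewrite -leqn0 leqNgt -has_count; apply: contra no_more.
  by case/hasP=> k _ /andP [_ opt_k]; apply/hasP; exists k; rewrite ?mem_enum.
rewrite muln0 muln_gt0 w_pos -has_count; apply/hasP; exists l; first exact: mem_enum.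
by rewrite ans_l clear_inactive_active.
Qed.

Lemma alg1_halts_from (Post : ('I_n -> bool) -> Prop) :
  (forall Ans, (forall l, inconsistent l <-> ~~ Ans l) -> Post Ans) ->
  forall psi ans, alg1_inv psi ans -> alg1_halts_with p Post psi ans.
Proof.
move=> PostP psi ans; move: {2}(count ans (enum 'I_n)) (erefl (count ans (enum 'I_n))).
move=> m; elim/ltn_ind: m psi ans => m IH psi ans count_ans inv.
constructor; first exact: exists_optimal_inv inv.
move=> opt opt_psi; split=> [more | no_more].
  apply: IH (erefl _) (loop_body_inv inv opt_psi).
  by rewrite -count_ans; apply: loop_body_count_lt.
have opt_off l : ~~ opt (p l).
  by apply: contra no_more => opt_l; apply/hasP; exists l; rewrite ?mem_enum.
have [_ _ inconsistent_inactive] := inv.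
apply: PostP => l; rewrite loop_body_ans opt_off andbT.
split; last exact: inconsistent_inactive.
by apply: contraPN => ans_l; apply: stop_active_consistent inv opt_psi no_more l ans_l.
Qed.

End Algorithm1.

Theorem proposition4
  (F : finType) (satS : {set F} -> bool) (T : eqType) (Q : {set F} -> T -> bool)
  (I : {set F})
  (n : nat) (a : 'I_n -> T)
  (a_inj : injective a)
  (a_enum : forall t, Q I t <-> exists l, a l = t)
  (V : finType) (phi : cnf V) (p : 'I_n -> V)
  (p_inj : injective p)
  (p_neg_only : forall c, c \in phi -> forall l, (p l, true) \notin c)
  (phi_sat : exists s : V -> bool, cnf_true s phi)
  (phi_char : forall l,
      (exists s : V -> bool, cnf_true s phi /\ s (p l) = true) <-> ~ ConsAns satS Q I (a l))
  (w : nat) (w_pos : 0 < w) :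
  alg1_halts_with p
    (fun Ans => forall l : 'I_n, ConsAns satS Q I (a l) <-> Ans l = true)
    (reduction4 p phi w) (fun _ => true).
Proof.
apply: (alg1_halts_from p_inj p_neg_only w_pos phi_sat phi_char); last first.
  exact: alg1_inv_reduction4.
move=> Ans inconsistent_off l; split=> [cons_l | Ans_l].
  by case Ans_l: (Ans l) => //; case: ((inconsistent_off l).2 (negbT Ans_l)).
by apply: NNPP => /(inconsistent_off l).1; rewrite Ans_l.
Qed.
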